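(* For every term variable $x$ and every $\delta\in\mathcal{T}_D$: $x\in[\![\delta]\!]$.
   Context: $\lambda\mu$-calculus (Parigot). Terms $M,N ::= x \mid \lambda x.M \mid MN \mid \mu\alpha.[\beta]M$ over disjoint denumerable sets of term variables and names. Structural substitution $T[\alpha\Leftarrow L]$ replaces every subterm $[\alpha]N$ of $T$ by $[\alpha]N'L$ where $N'=N[\alpha\Leftarrow L]$ (recursively). Reduction is the compatible closure of $(\lambda x.M)N\to M[N/x]$ (capture-avoiding) and $(\mu\beta.[\gamma]M)N\to\mu\beta.(([\gamma]M)[\beta\Leftarrow N])$. $\mathcal{SN}$ is the set of terms with no infinite reduction sequence. A stack is a finite (possibly empty) sequence $\vec L=L_1:\cdots:L_k$ of terms, and $M\vec L$ denotes $ML_1\cdots L_k$; $\mathcal{SN}^*$ is the set of stacks of terms in $\mathcal{SN}$. Types: with constant $\nu$ and symbol $\omega$ (not itself a type), $\mathcal{T}_D:\ \delta ::= \nu \mid \omega\to\nu \mid \kappa\to\nu \mid \delta\wedge\delta$; $\mathcal{T}_C:\ \kappa ::= \delta\times\omega \mid \delta\times\kappa \mid \kappa\wedge\kappa$. Interpretation: $[\![\nu]\!]=[\![\omega\to\nu]\!]=\mathcal{SN}$; $[\![\kappa\to\nu]\!]=\{M\mid \forall\vec L\in[\![\kappa]\!].\ M\vec L\in\mathcal{SN}\}$; $[\![\delta\times\omega]\!]=\{N:\vec L\mid N\in[\![\delta]\!],\vec L\in\mathcal{SN}^*\}$; $[\![\delta\times\kappa]\!]=\{N:\vec L\mid N\in[\![\delta]\!],\vec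 L\in[\![\kappa]\!]\}$; $[\![\sigma\wedge\tau]\!]=[\![\sigma]\!]\cap[\![\tau]\!]$. *)

(* lambda-mu-calculus (Parigot) with de Bruijn indices for
   both term variables and names (two independent index spaces). *)
From Stdlib Require Import Arith List.
Import ListNotations.

(* Terms:  M ::= x | \x.M | M N | mu alpha.[beta]M
   [Mu b M] represents  mu alpha.[beta]M  where the mu binds name index 0
   inside, and [b] is the name index of beta in the scope under the binder. *)
Inductive term : Type :=
| Var : nat -> term
| Lam : term -> term
| App : term -> term -> term
| Mu  : nat -> term -> term.

Fixpoint lift_t (c : nat) (t : term) : term :=
  match t with
  | Var n => if c <=? n then Var (S n) else Var n
  | Lam u => Lam (lift_t (S c) u)
  | App u v => App (lift_t c u) (lift_t c v)
  | Mu b u => Mu b (lift_t c u)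
  end.

Fixpoint lift_n (c : nat) (t : term) : term :=
  match t with
  | Var n => Var n
  | Lam u => Lam (lift_n c u)
  | App u v => App (lift_n c u) (lift_n c v)
  | Mu b u => Mu (if S c <=? b then S b else b) (lift_n (S c) u)
  end.

Fixpoint subst (k : nat) (N : term) (t : term) : term :=
  match t with
  | Var n => if n =? k then N else if k <? n then Var (pred n) else Var n
  | Lam u => Lam (subst (S k) (lift_t 0 N) u)
  | App u v => App (subst k N u) (subst k N v)
  | Mu b u => Mu b (subst k (lift_n 0 N) u)
  end.

(* structural substitution t[a <= L]: every [a]N becomes [a](N' L) *)
Fixpoint ssubst (a : nat) (L : term) (t : term) : term :=
  match t with
  | Var n => Var n
  | Lam u => Lam (ssubst a (lift_t 0 L) u)
  | App u v => App (ssubst a L u) (ssubst a L v)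
  | Mu b u =>
      let L' := lift_n 0 L in
      let u' := ssubst (S a) L' u in
      if b =? S a then Mu b (App u' L') else Mu b u'
  end.

Inductive step : term -> term -> Prop :=
| step_beta : forall M N, step (App (Lam M) N) (subst 0 N M)
| step_mu : forall g M N,
    (* (mu b.[g]M) N -> mu b.(([g]M)[b <= N]) *)
    let N' := lift_n 0 N in
    let M' := ssubst 0 N' M in
    step (App (Mu g M) N) (Mu g (if g =? 0 then App M' N' else M'))
| step_lam : forall M M', step M M' -> step (Lam M) (Lam M')
| step_appl : forall M M' N, step M M' -> step (App M N) (App M' N)
| step_appr : forall M N N', step N N' -> step (App M N) (App M N')
| step_mu_ctx : forall b M M', step M M' -> step (Mu b M) (Mu b M').

Definition SN (M : term) : Prop :=
  ~ (exists f : nat -> term, f 0 = M /\ forall n, step (f n) (f (S n))).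

Definition apps (M : term) (Ls : list term) : term := fold_left App Ls M.

(* Types: T_D (delta) and T_C (kappa) *)
Inductive dtype : Type :=
| Nu : dtype
| OmegaArr : dtype
| KArr : ctype -> dtype
| DAnd : dtype -> dtype -> dtype
with ctype : Type :=
| TimesOmega : dtype -> ctype
| Times : dtype -> ctype -> ctype
| CAnd : ctype -> ctype -> ctype.

Fixpoint interp_d (d : dtype) (M : term) {struct d} : Prop :=
  match d with
  | Nu => SN M
  | OmegaArr => SN M
  | KArr k => forall Ls : list term, interp_c k Ls -> SN (apps M Ls)
  | DAnd d1 d2 => interp_d d1 M /\ interp_d d2 M
  end
with interp_c (k : ctype) (s : list term) {struct k} : Prop :=
  match k with
  | TimesOmega d =>
      match s with
      | [] => False
      | N :: Ls => interp_d d N /\ Forall SN Ls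
      end
  | Times d k' =>
      match s with
      | [] => False
      | N :: Ls => interp_d d N /\ interp_c k' Ls
      end
  | CAnd k1 k2 => interp_c k1 s /\ interp_c k2 s
  end.

(* Simultaneous induction on types: every [[delta]] contains the variables and
   is contained in SN, and every [[kappa]] contains all sufficiently long
   stacks of variables and is contained in SN*.  Variables reach [[kappa -> nu]]
   because a variable applied to SN arguments is SN (nothing can reduce at the
   head), and [[kappa -> nu]] is inside SN because M is SN as soon as M applied
   to some stack of [[kappa]] is. *)
From Stdlib Require Import List Lia Relations Classical ClassicalEpsilon.
Import ListNotations.

Section Chains.
Variables (A : Type) (R : A -> A -> Prop).

Definition infinite_chain_from (a : A) : Prop :=
  exists f : nat -> A, f 0 = a /\ forall n, R (f n) (f (S n)).

Lemma acc_no_infinite_chain (a : A) :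
  Acc (transp A R) a -> ~ infinite_chain_from a.
Proof.
  induction 1 as [a _ IH]; intros [f [f0 fR]]; subst a.
  apply (IH (f 1) (fR 0)).
  exists (fun n => f (S n)); split; [reflexivity | intro n; apply fR].
Qed.

(* Dependent choice, extracted classically, builds the chain of non-accessible
   elements. *)
Lemma no_infinite_chain_acc (a : A) :
  ~ infinite_chain_from a -> Acc (transp A R) a.
Proof.
  intro Hfin; apply NNPP; intro Hna; apply Hfin.
  set (B := {b : A | ~ Acc (transp A R) b}).
  assert (next : forall b : B, {c : B | R (proj1_sig b) (proj1_sig c)}).
  { intros [b Hb]; apply constructive_indefinite_description.
    apply NNPP; intro Hnone; apply Hb; constructor; intros c Hbc.
    apply NNPP; intro Hc; apply Hnone; now exists (exist _ c Hc). }
  set (F := fun b : B => proj1_sig (next b)).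
  exists (fun n => proj1_sig (Nat.iter n F (exist _ a Hna))).
  split; [reflexivity | intro n; exact (proj2_sig (next _))].
Qed.

End Chains.

Arguments infinite_chain_from {A} R a.

Definition SNacc : term -> Prop := Acc (transp term step).

Lemma SN_acc (M : term) : SN M <-> SNacc M.
Proof.
  split; [apply no_infinite_chain_acc | apply acc_no_infinite_chain].
Qed.

Lemma step_apps (Ls : list term) (M M' : term) :
  step M M' -> step (apps M Ls) (apps M' Ls).
Proof.
  revert M M'; induction Ls as [|N Ls IH]; intros M M' s; [exact s|].
  apply IH, step_appl, s.
Qed.

Lemma SN_apps_head (Ls : list term) (M : term) : SN (apps M Ls) -> SN M.
Proof.
  intros HSN [f [f0 fs]]; apply HSN.
  exists (fun n => apps (f n) Ls); split.
  - now rewrite f0.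
  - intro n; apply step_apps, fs.
Qed.

Inductive neutral : term -> Prop :=
| neutral_var x : neutral (Var x)
| neutral_app M N : neutral M -> neutral (App M N).

Lemma neutral_step (M M' : term) : step M M' -> neutral M -> neutral M'.
Proof.
  induction 1; inversion 1; subst;
    try match goal with H : neutral (Lam _) |- _ => inversion H end;
    try match goal with H : neutral (Mu _ _) |- _ => inversion H end;
    constructor; auto.
Qed.

Lemma SNacc_app_neutral (M N : term) :
  neutral M -> SNacc M -> SNacc N -> SNacc (App M N).
Proof.
  intros Hneu HM HN; revert Hneu N HN; induction HM as [M _ IHM].
  intros Hneu N HN; induction HN as [N HN IHN].
  constructor; intros T s; inversion s; subst.
  - inversion Hneu.
  - inversion Hneu.
  - apply IHM; [assumption | eapply neutral_step; eauto | now constructor].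
  - apply IHN; assumption.
Qed.

Lemma SN_apps_var (x : nat) (Ls : list term) :
  Forall SN Ls -> SN (apps (Var x) Ls).
Proof.
  intro HLs; apply SN_acc.
  enough (H : forall M, neutral M -> SNacc M -> SNacc (apps M Ls))
    by (apply H; [constructor | constructor; intros M s; inversion s]).
  induction HLs as [|N Ls HN _ IH]; intros M Hneu HM; [exact HM|].
  apply IH; [now constructor |].
  now apply SNacc_app_neutral, SN_acc.
Qed.

Lemma SN_var (x : nat) : SN (Var x).
Proof. exact (SN_apps_var x [] (Forall_nil _)). Qed.

(* Every stack type ends in [delta x omega], so [[kappa]] accepts stacks of
   any length from [ctype_arity kappa] on. *)
Fixpoint ctype_arity (k : ctype) : nat :=
  match k with
  | TimesOmega _ => 1
  | Times _ k' => S (ctype_arity k')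
  | CAnd k1 k2 => Nat.max (ctype_arity k1) (ctype_arity k2)
  end.

Scheme dtype_ctype_ind := Induction for dtype Sort Prop
with ctype_dtype_ind := Induction for ctype Sort Prop.

Lemma interp_var_SN :
  forall d, (forall x, interp_d d (Var x)) /\ (forall M, interp_d d M -> SN M).
Proof.
  apply (dtype_ctype_ind
    (fun d => (forall x, interp_d d (Var x)) /\ (forall M, interp_d d M -> SN M))
    (fun k => (forall m, ctype_arity k <= m -> interp_c k (repeat (Var 0) m))
              /\ (forall Ls, interp_c k Ls -> Forall SN Ls)));
    cbn [interp_d interp_c ctype_arity].
  - split; [exact SN_var | auto].
  - split; [exact SN_var | auto].
  - intros k [Hvars HSN]; split.
    + intros x Ls HLs; apply SN_apps_var, HSN, HLs.
    + intros M HM; apply (SN_apps_head (repeat (Var 0) (ctype_arity k))).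
      apply HM, Hvars, le_n.
  - intros d1 [Hv1 HSN1] d2 [Hv2 _]; split; [auto | intros M [HM _]; auto].
  - intros d [Hv HSN]; split.
    + intros [|m] Hm; [lia|]; split; [apply Hv|].
      apply Forall_forall; intros y Hy; apply repeat_spec in Hy; subst y.
      apply SN_var.
    + intros [|N Ls] H; [contradiction | destruct H; constructor; auto].
  - intros d [Hv HSN] k [Hvars HSNk]; split.
    + intros [|m] Hm; [lia | split; [apply Hv | apply Hvars; lia]].
    + intros [|N Ls] H; [contradiction | destruct H; constructor; auto].
  - intros k1 [Hv1 HSN1] k2 [Hv2 _]; split.
    + intros m Hm; split; [apply Hv1 | apply Hv2]; lia.
    + intros Ls [HLs _]; auto.
Qed.

Theorem mainTheorem9 : forall (x : nat) (d : dtype), interp_d d (Var x).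
Proof. intros x d; apply (interp_var_SN d). Qed.
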